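(* Let $L>0$, $M\ge1$ an integer, $\Delta x=L/M$, and cells $C_j=[x_{j-\frac12},x_{j+\frac12}]$ with centers $x_j=j\Delta x$, $j\in\{-M,\dots,M\}$. Let $H\in C^1([0,\infty))$, $V:\mathbb{R}\to\mathbb{R}$, and let $(W_k)_{k=-2M}^{2M}$ be real numbers with $W_{-k}=W_k$ for all $k$. Let $t\mapsto(\overline\rho_j(t))_{j=-M}^M$ be a differentiable solution on $(0,\infty)$, with $\overline\rho_j(t)\ge0$, of the ODE system \[ \frac{d\overline\rho_j}{dt}=-\frac{F_{j+\frac12}-F_{j-\frac12}}{\Delta x},\qquad j=-M,\dots,M, \] where at each time: slopes $(\rho_x)_j$ are chosen so that the point values $\rho_j^{\rm E}=\overline\rho_j+\frac{\Delta x}{2}(\rho_x)_j$ and $\rho_j^{\rm W}=\overline\rho_j-\frac{\Delta x}{2}(\rho_x)_j$ are nonnegative; $\xi_j=\Delta x\sum_{i=-M}^{M}W_{j-i}\overline\rho_i+H'(\overline\rho_j)+V(x_j)$; $u_{j+\frac12}=-\frac{\xi_{j+1}-\xi_j}{\Delta x}$, $u^\pm_{j+\frac12}$ its positive part $\max(u_{j+\frac12},0)$ and negative part $\min(u_{j+\frac12},0)$; $F_{j+\frac12}=u_{j+\frac12}^+\rho_j^{\rm E}+u_{j+\frac12}^-\rho_{j+1}^{\rm W}$ for $j=-M,\dots,M-1$; and $F_{-M-\frac12}=F_{M+\frac12}=0$. Define the discrete entropy and entropy dissipation \[ E_\Delta(t)=\Delta x\sum_{j=-M}^{M}\Big[\tfrac12\Delta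 x\sum_{i=-M}^{M}W_{j-i}\overline\rho_i\overline\rho_j+H(\overline\rho_j)+V(x_j)\overline\rho_j\Big],\qquad I_\Delta(t)=\Delta x\sum_{j=-M}^{M-1}\big(u_{j+\frac12}\big)^2\min\big(\rho_j^{\rm E},\rho_{j+1}^{\rm W}\big). \] Then $\frac{d}{dt}E_\Delta(t)\le -I_\Delta(t)$ for all $t>0$.
   Context: This is the one-dimensional semi-discrete finite-volume scheme with no-flux boundary conditions for $\rho_t=\partial_x\big[\rho\,\partial_x\big(H'(\rho)+V(x)+W*\rho\big)\big]$ on $[-L,L]$ with symmetric interaction potential $W$ and $\rho_0\ge0$; $W_{j-i}$ approximates $W(x_j-x_i)$ (e.g. $W_{j-i}=W(x_j-x_i)$), so the symmetry $W_{-k}=W_k$ reflects the symmetry of $W$. $E_\Delta$ is a discrete version of the free energy $E(\rho)=\int H(\rho)+\int V\rho+\frac12\iint W(x-y)\rho(x)\rho(y)$. *)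

From HB Require Import structures.
From mathcomp Require Import all_boot all_order all_algebra.
From mathcomp Require Import all_classical all_reals all_analysis.
Set Implicit Arguments. Unset Strict Implicit. Unset Printing Implicit Defensive.
Import Order.TTheory GRing.Theory Num.Theory.
Import numFieldNormedType.Exports.
Local Open Scope ring_scope.

(* Cell index convention: the paper's index j in {-M,...,M} is represented by
   the natural number j + M in {0,...,2M}.  Interface j+1/2 (paper) is the
   right interface of shifted cell j. *)

Section FVScheme.
Variables (R : realType) (L : R) (M : nat).
Variables (W : int -> R) (H' : R -> R) (V : R -> R).
Variables (rho rx : nat -> R -> R).

Definition dx : R := L / M%:R.

Definition xc (j : nat) : R := (j%:R - M%:R) * dx.

Definition rhoE (j : nat) (t : R) : R := rho j t + dx / 2 * rx j t.
Definition rhoW (j : nat) (t : R) : R := rho j t - dx / 2 * rx j t.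

Definition xi (j : nat) (t : R) : R :=
  dx * (\sum_(0 <= i < (2 * M).+1) W (j%:Z - i%:Z) * rho i t)
  + H' (rho j t) + V (xc j).

Definition u (j : nat) (t : R) : R := - ((xi j.+1 t - xi j t) / dx).

Definition Fr (j : nat) (t : R) : R :=
  if (j < 2 * M)%N then
    Num.max (u j t) 0 * rhoE j t + Num.min (u j t) 0 * rhoW j.+1 t
  else 0.

Definition Fl (j : nat) (t : R) : R :=
  if j is j'.+1 then Fr j' t else 0.

Variable (H : R -> R).

Definition Edelta (t : R) : R :=
  dx * \sum_(0 <= j < (2 * M).+1)
        (2^-1 * dx * (\sum_(0 <= i < (2 * M).+1) W (j%:Z - i%:Z) * rho i t * rho j t)
         + H (rho j t) + V (xc j) * rho j t).

Definition Idelta (t : R) : R :=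
  dx * \sum_(0 <= j < 2 * M) (u j t) ^+ 2 * Num.min (rhoE j t) (rhoW j.+1 t).

End FVScheme.

From HB Require Import structures.
From mathcomp Require Import all_boot all_order all_algebra.
From mathcomp Require Import all_classical all_reals all_analysis.
From mathcomp Require Import ring lra zify.
Import Order.TTheory GRing.Theory Num.Theory.
Import numFieldNormedType.Exports.
Local Open Scope ring_scope.
Local Open Scope classical_set_scope.

(* By the symmetry of W the discrete entropy has time derivative
   dx * sum_j xi_j * rho_j'.  Inserting the conservative form of the scheme and
   summing by parts (the boundary fluxes vanish) turns this into
   - dx * sum_j u_{j+1/2} F_{j+1/2}, and the upwind choice of F gives
   u F >= u^2 min(rho^E_j, rho^W_{j+1}) interface by interface.  The only
   analytic point is differentiating H(rho_j) when rho_j(t) = 0, where H is just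
   right-differentiable: there H(r) = H(0) + r * s(r) with a slope s that is
   continuous at 0. *)

Section PointwiseDerive.
Context {R : realType}.

Lemma is_derive_add {f g : R -> R} {x a b : R} :
  is_derive x 1 f a -> is_derive x 1 g b ->
  is_derive x 1 (fun y => f y + g y) (a + b).
Proof. exact: is_deriveD. Qed.

Lemma is_derive_mul {f g : R -> R} {x a b : R} :
  is_derive x 1 f a -> is_derive x 1 g b ->
  is_derive x 1 (fun y => f y * g y) (a * g x + f x * b).
Proof. by move=> fa gb; apply: is_derive_eq (is_deriveM fa gb) _; rewrite addrC mulrC. Qed.

Lemma is_derive_scale {f : R -> R} {x a k : R} : is_derive x 1 f a ->
  is_derive x 1 (fun y => k * f y) (k * a).
Proof. exact: is_deriveZ. Qed.

Lemma is_derive_sum_nat {m n : nat} {h : nat -> R -> R} {dh : nat -> R} {x : R} :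
  (forall i, (m <= i < n)%N -> is_derive x 1 (h i) (dh i)) ->
  is_derive x 1 (fun y => \sum_(m <= i < n) h i y) (\sum_(m <= i < n) dh i).
Proof.
move=> hd; rewrite -fct_sumE big_nat [X in is_derive _ _ _ X]big_nat.
elim/big_rec2: _ => [|i dy y /hd]; first exact: is_derive_cst.
exact: is_deriveD.
Qed.

Lemma is_derive_quadratic_form {n : nat} {K : nat -> nat -> R}
    {r : nat -> R -> R} {d : nat -> R} {t : R} :
  (forall i j, (i < n)%N -> (j < n)%N -> K i j = K j i) ->
  (forall i, (i < n)%N -> is_derive t 1 (r i) (d i)) ->
  is_derive t 1 (fun s => 2^-1 * \sum_(0 <= j < n) \sum_(0 <= i < n) K j i * r i s * r j s)
    (\sum_(0 <= j < n) (\sum_(0 <= i < n) K j i * r i t) * d j).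
Proof.
move=> Ksym rd.
set G := \sum_(0 <= j < n) _.
have left_part : \sum_(0 <= j < n) \sum_(0 <= i < n) K j i * d i * r j t = G.
  rewrite exchange_big /=; apply: eq_big_nat => j /andP[_ jn].
  rewrite mulr_suml; apply: eq_big_nat => i /andP[_ i_n].
  by rewrite Ksym //; ring.
have right_part : \sum_(0 <= j < n) \sum_(0 <= i < n) K j i * r i t * d j = G.
  by apply: eq_bigr => j _; rewrite mulr_suml.
apply: is_derive_eq.
  apply: is_derive_scale; apply: is_derive_sum_nat => j /andP[_ jn].
  apply: is_derive_sum_nat => i /andP[_ i_n].
  by apply: is_derive_mul; [apply: is_derive_scale; apply: rd | apply: rd].
under eq_bigr do rewrite big_split.
rewrite big_split /= left_part right_part; lra.
Qed.

Lemma is_derive_mul_root {f g : R -> R} {t df : R} :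
  is_derive t 1 f df -> f t = 0 -> {for t, continuous g} ->
  is_derive t 1 (fun s => f s * g s) (df * g t).
Proof.
move=> [fq fdf] ft0 gt.
have gq : (fun h : R => g (h *: 1 + t)) @ 0^' --> g t.
  apply: cvg_within_filter.
  have -> : (fun h : R => g (h *: 1 + t)) = g \o shift t.
    by apply/funext => h /=; rewrite [h *: _]mulr1.
  by rewrite cvg_comp_shift add0r.
have q : (fun h : R => h^-1 *: (((fun s => f s * g s) \o shift t) (h *: 1)
            - f t * g t)) @ 0^' --> df * g t.
  rewrite -fdf; apply: cvg_trans (cvgM fq gq).
  by apply: near_eq_cvg; near=> h; rewrite /= ft0 !mul0r !subr0 scalerAl.
exact: DeriveDef (cvgP _ q) (cvg_lim _ q).
Unshelve. all: by end_near.
Qed.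
End PointwiseDerive.

Section ChainRuleOnHalfLine.
Context {R : realType} {H H' : R -> R}.
Hypothesis H'_right0 : (fun h : R => h^-1 * (H h - H 0)) @ 0^'+ --> H' 0.

Definition slope0 (r : R) : R := if 0 < r then r^-1 * (H r - H 0) else H' 0.

Lemma slope0_continuous : {for 0, continuous slope0}.
Proof.
apply/(left_right_continuousP slope0 0); rewrite /slope0 ltxx; split.
  have slope_left : {near 0^'-, cst (H' 0) =1 slope0}.
    by near=> r; rewrite /slope0 ltNge ltW //; near: r; exact: nbhs_left_lt.
  exact: cvg_trans (near_eq_cvg slope_left) (cvg_cst _).
have slope_right : {near 0^'+, (fun h => h^-1 * (H h - H 0)) =1 slope0}.
  by near=> r; rewrite /slope0 ifT //; near: r; exact: nbhs_right_gt.
exact: cvg_trans (near_eq_cvg slope_right) H'_right0.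
Unshelve. all: by end_near.
Qed.

Lemma slope0E (r : R) : 0 <= r -> H r = H 0 + r * slope0 r.
Proof.
rewrite /slope0 le_eqVlt => /predU1P[<-|r0]; first by rewrite mul0r addr0.
by rewrite r0 mulrA mulfV ?gt_eqF // mul1r addrC subrK.
Qed.

Hypothesis H_derive : forall r : R, 0 < r -> is_derive r 1 H (H' r).

Lemma is_derive_comp_nonneg {f : R -> R} {t df : R} :
  (\forall s \near t, 0 <= f s) -> is_derive t 1 f df ->
  is_derive t 1 (fun s => H (f s)) (H' (f t) * df).
Proof.
move=> f_ge0 fdf; have := nbhs_singleton f_ge0.
rewrite le_eqVlt => /predU1P[ft0|ft_gt0].
  2: exact (is_derive1_comp (H_derive _ ft_gt0) fdf).
have slope_f : {for t, continuous (slope0 \o f)}.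
  apply: continuous_comp; first exact/differentiable_continuous/derivable1_diffP.
  by rewrite -ft0; exact: slope0_continuous.
have near_H : \forall s \near t, H 0 + f s * slope0 (f s) = H (f s).
  by apply: filterS f_ge0 => s /slope0E ->.
apply: (near_eq_is_derive near_H).
have := is_deriveD (is_derive_cst (H 0) t 1) (is_derive_mul_root fdf (esym ft0) slope_f).
by rewrite /= -ft0 /slope0 ltxx add0r mulrC.
Unshelve. all: by end_near.
Qed.
End ChainRuleOnHalfLine.

Lemma sum_by_parts (R : comRingType) (x f : nat -> R) (n : nat) :
  \sum_(0 <= j < n.+1) x j * (f j - (if j is j'.+1 then f j' else 0)) =
  \sum_(0 <= j < n) f j * (x j - x j.+1) + x n * f n.
Proof.
elim: n => [|n IH]; first by rewrite big_nat1 big_geq // subr0 add0r.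
by rewrite big_nat_recr //= IH big_nat_recr //=; ring.
Qed.

Lemma upwind_flux_dissipation (R : realDomainType) (u a b : R) :
  u ^+ 2 * Num.min a b <= u * (Num.max u 0 * a + Num.min u 0 * b).
Proof.
have min_le : Num.min a b <= a /\ Num.min a b <= b by rewrite !ge_min !lexx orbT.
by have [_|_] := lerP u 0;
  rewrite mul0r ?add0r ?addr0 mulrA -expr2 ler_wpM2l ?sqr_ge0 //; case: min_le.
Qed.

Section Scheme.
Context {R : realType} {L : R} {M : nat} {H H' V : R -> R} {W : int -> R}.
Context {rho rx : nat -> R -> R}.
Local Notation N := (2 * M)%N.
Local Notation dx := (dx L M).
Local Notation xi := (xi L M W H' V rho).
Local Notation u := (u L M W H' V rho).
Local Notation Fr := (Fr L M W H' V rho rx).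
Local Notation Fl := (Fl L M W H' V rho rx).

Lemma EdeltaE : Edelta L M W V rho H = fun s =>
  dx * (dx * (2^-1 * \sum_(0 <= j < N.+1) \sum_(0 <= i < N.+1)
                        W (j%:Z - i%:Z) * rho i s * rho j s)
        + \sum_(0 <= j < N.+1) (H (rho j s) + V (xc L M j) * rho j s)).
Proof.
apply/funext => s; rewrite /Edelta; congr (_ * _).
rewrite [dx * (2^-1 * _)]mulrA mulr_sumr -big_split /=.
by apply: eq_bigr => j _; ring.
Qed.

Lemma xi_sub (j : nat) (t : R) : dx != 0 -> xi j t - xi j.+1 t = dx * u j t.
Proof. by move=> dx0; rewrite /u; field. Qed.

Lemma Fr_last (t : R) : Fr N t = 0.
Proof. by rewrite /Fr ltnn. Qed.

Lemma is_derive_Edelta {t : R} {d : nat -> R} :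
  (forall r : R, 0 < r -> is_derive r 1 H (H' r)) ->
  (fun h : R => h^-1 * (H h - H 0)) @ 0^'+ --> H' 0 ->
  (forall k : int, `|k| <= N%:Z -> W (- k) = W k) ->
  (forall j, (j <= N)%N -> \forall s \near t, 0 <= rho j s) ->
  (forall j, (j <= N)%N -> is_derive t 1 (rho j) (d j)) ->
  is_derive t 1 (Edelta L M W V rho H) (dx * \sum_(0 <= j < N.+1) xi j t * d j).
Proof.
move=> H_derive H'_right0 W_sym rho_ge0 rho_d.
have W_symm i j : (i < N.+1)%N -> (j < N.+1)%N -> W (i%:Z - j%:Z) = W (j%:Z - i%:Z).
  by move=> i_lt j_lt; rewrite -opprB W_sym //; lia.
have local_d j : (0 <= j < N.+1)%N ->
    is_derive t 1 (fun s => H (rho j s) + V (xc L M j) * rho j s)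
      (H' (rho j t) * d j + V (xc L M j) * d j).
  move=> /andP[_ jN]; apply: is_derive_add (is_derive_scale (rho_d j jN)).
  exact (is_derive_comp_nonneg H'_right0 H_derive (rho_ge0 j jN) (rho_d j jN)).
have quad_d := is_derive_quadratic_form W_symm rho_d.
rewrite EdeltaE; refine (is_derive_eq (is_derive_scale (is_derive_add
  (is_derive_scale quad_d) (is_derive_sum_nat local_d))) _).
congr (_ * _); rewrite mulr_sumr -big_split /=.
by apply: eq_bigr => j _; rewrite /xi; ring.
Qed.

Lemma sum_xi_flux_div_le (t : R) : 0 < dx ->
  dx * \sum_(0 <= j < N.+1) xi j t * - ((Fr j t - Fl j t) / dx)
    <= - Idelta L M W H' V rho rx t.
Proof.
move=> dx_gt0; have dx_neq0 : dx != 0 by rewrite gt_eqF.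
rewrite (_ : _ * _ = - \sum_(0 <= j < N.+1)
    xi j t * (Fr j t - (if j is j'.+1 then Fr j' t else 0))); last first.
  by rewrite mulr_sumr -sumrN; apply: eq_bigr => -[|j] _; rewrite /Fl; field.
rewrite sum_by_parts Fr_last mulr0 addr0 lerN2 /Idelta mulr_sumr.
apply: ler_sum_nat => j /andP[_ jN].
rewrite xi_sub // /Fr jN [X in _ <= X]mulrC -[X in _ <= X]mulrA ler_pM2l //.
exact: upwind_flux_dissipation.
Qed.
End Scheme.

Theorem theorem2p2 (R : realType) (L : R) (M : nat)
  (H H' V : R -> R) (W : int -> R) (rho rx : nat -> R -> R) :
  0 < L -> (1 <= M)%N ->
  (* H in C^1([0,oo)) with derivative H' *)
  (forall r : R, 0 < r -> is_derive r 1 H (H' r)) ->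
  (fun h : R => h^-1 * (H h - H 0)) @ 0^'+ --> H' 0 ->
  {within [set r : R | 0 <= r], continuous H'} ->
  (* symmetric interaction coefficients W_k, k = -2M..2M *)
  (forall k : int, `|k| <= (2 * M)%:Z -> W (- k) = W k) ->
  (* nonnegative solution, slopes giving nonnegative point values *)
  (forall (j : nat) (t : R), (j <= 2 * M)%N -> 0 < t -> 0 <= rho j t) ->
  (forall (j : nat) (t : R), (j <= 2 * M)%N -> 0 < t ->
     0 <= rhoE L M rho rx j t /\ 0 <= rhoW L M rho rx j t) ->
  (* the semi-discrete ODE system *)
  (forall (j : nat) (t : R), (j <= 2 * M)%N -> 0 < t ->
     is_derive t 1 (rho j)
       (- ((Fr L M W H' V rho rx j t - Fl L M W H' V rho rx j t) / dx L M))) ->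
  forall t : R, 0 < t ->
    derivable (Edelta L M W V rho H) t 1 /\
    (Edelta L M W V rho H)^`() t <= - Idelta L M W H' V rho rx t.
Proof.
move=> L_gt0 M_ge1 H_derive H'_right0 _ W_sym rho_ge0 _ rho_ode t t_gt0.
have dx_gt0 : 0 < dx L M by rewrite divr_gt0 // ltr0n; lia.
have rho_near_ge0 j : (j <= 2 * M)%N -> \forall s \near t, 0 <= rho j s.
  by move=> jN; near=> s; apply: rho_ge0 => //; near: s; exact: lt_nbhsr.
have E_d := is_derive_Edelta H_derive H'_right0 W_sym rho_near_ge0
  (fun j jN => rho_ode j t jN t_gt0).
split; first exact: ex_derive.
by rewrite derive1E derive_val; exact: sum_xi_flux_div_le.
Unshelve. all: by end_near.
Qed.
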